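(* Let $d,r$ be positive integers with $d\le q$ and $r\le\binom{m+d}{d}$. If $r<\binom{m+d}{d}$, let $i,j$ be the unique integers with $r=j+\sum_{a=1}^{i}\binom{m+d-a}{d-1}$, $0\le i\le m$ and $0\le j<\binom{m+d-i-1}{d-1}$; if $r=\binom{m+d}{d}$, let $i=m$ and $j=1$. Then $$e_r(d,m)\ge H_j(d-1,m-i)+\mathsf{p}_{m-i-1}.$$
   Context: Let $q$ be a prime power, $\mathbb{F}_q$ the finite field with $q$ elements, $m$ a positive integer. For $j\in\mathbb{Z}$, $\mathsf{p}_j=q^j+\dots+q+1$ if $j\ge0$ and $\mathsf{p}_j=0$ if $j<0$. $e_r(d,m)$ is the maximum, over all families of $r$ linearly independent homogeneous polynomials $F_1,\dots,F_r$ of degree $d$ in $\mathbb{F}_q[x_0,\dots,x_m]$, of the number of points of $\mathbb{P}^m(\mathbb{F}_q)$ at which all $F_i$ vanish. For nonnegative integers $d,n$ and $1\le s\le\binom{n+d}{n}$ (with $n\ge1$, $d\ge 1$, $d<q$): $H_s(d,n)=\sum_{k=1}^{n}\alpha_kq^{n-k}$, where $(\alpha_1,\dots,\alpha_n)$ is the $s$-th element, in descending lexicographic order, of the set of $n$-tuples of integers $(\beta_1,\dots,\beta_n)$ with $0\le\beta_k<q$ and $\beta_1+\dots+\beta_n\le d$. Conventions: $H_0(d,n)=q^n$ for all $d,n\ge0$, and $H_1(d,n)=0$ if $d=0$ or $n=0$. *)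

From HB Require Import structures.
From mathcomp Require Import all_boot all_order all_algebra all_field.
From mathcomp Require Import mpoly.
From Stdlib Require Import ClassicalEpsilon.

Set Implicit Arguments.
Unset Strict Implicit.
Unset Printing Implicit Defensive.

Import Order.TTheory GRing.Theory.
Local Open Scope ring_scope.

Section Defs.
Variable F : finFieldType.

Definition qF : nat := #|F|.

Definition pq (j : int) : nat :=
  match j with
  | Posz n => (\sum_(0 <= t < n.+1) qF ^ t)%N
  | Negz _ => 0%N
  end.

(* Points of P^m(F_q), represented by the vectors of F^(m+1) whose first
   nonzero coordinate equals 1 (one representative per projective point). *)
Definition normalized (m : nat) (x : {ffun 'I_m.+1 -> F}) : bool :=
  [exists k : 'I_m.+1,
     (x k == 1) && [forall l : 'I_m.+1, (l < k)%N ==> (x l == 0)]].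

Definition nzeros (m r : nat) (P : 'I_r -> {mpoly F[m.+1]}) : nat :=
  #|[set x : {ffun 'I_m.+1 -> F} |
       normalized x && [forall i : 'I_r, (P i).@[x] == 0]]|.

Definition lin_indep (m r : nat) (P : 'I_r -> {mpoly F[m.+1]}) : Prop :=
  forall c : 'I_r -> F, \sum_(i < r) c i *: P i = 0 -> forall i, c i = 0.

Definition admissible (r d m : nat) (P : 'I_r -> {mpoly F[m.+1]}) : Prop :=
  (forall i, P i \is d.-homog) /\ lin_indep P.

Definition pdec (P : Prop) : bool :=
  if excluded_middle_informative P then true else false.

(* e_r(d,m): the maximum of nzeros over admissible families (the number of
   zeros is bounded by the number of vectors of F^(m+1)). *)
Definition e_rdm (r d m : nat) : nat :=
  (\max_(n < #|{ffun 'I_m.+1 -> F}|.+1 |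
      pdec (exists P : 'I_r -> {mpoly F[m.+1]}, admissible d P /\ nzeros P = n))
     (n : nat))%N.

End Defs.

Fixpoint lexge (s t : seq nat) : bool :=
  match s, t with
  | [::], _ => true
  | _ :: _, [::] => true
  | a :: s', b :: t' => (b < a)%N || ((a == b) && lexge s' t')
  end.

Fixpoint tuples (q n d : nat) : seq (seq nat) :=
  match n with
  | 0 => [:: [::]]
  | n'.+1 => flatten [seq [seq b :: t | t <- tuples q n' (d - b)]
                     | b <- iota 0 (minn q d.+1)]
  end.

Definition Hs (q s d n : nat) : nat :=
  if s is s'.+1 then
    let alpha := nth [::] (sort lexge (tuples q n d)) s' in
    (\sum_(k < n) nth 0 alpha k * q ^ (n - k.+1))%N
  else (q ^ n)%N.

From HB Require Import structures.
From mathcomp Require Import all_boot all_order all_algebra all_field.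
From mathcomp Require Import mpoly.
From mathcomp Require Import zify.
From Stdlib Require Import ClassicalEpsilon.

Set Implicit Arguments.
Unset Strict Implicit.
Unset Printing Implicit Defensive.

(* Put n := m - i and let e_0, e_1, ... enumerate F.  The family consists of
   the degree d monomials in x_a, ..., x_m divisible by x_a, for a < i (there
   are sum_(a = 1 .. i) C(m + d - a, d - 1) of them), together with the
   products x_i^(d - |b|) * prod_k prod_(l < b_k) (x_(i+1+k) - e_l x_i) for the
   j lexicographically largest tuples b of the set defining H_j(d - 1, n).
   All of them vanish at the points (0 : .. : 0 : 0 : w) with w in P^(n-1),
   which gives p_(n-1) zeros, and at the points (0 : .. : 0 : 1 : w) whose
   digit vector (the indices of the w_k among the e_l) is lexicographically
   below the j-th tuple alpha: every chosen b is >= alpha, so some w_k is one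
   of e_0, .., e_(b_k - 1).  There are H_j(d - 1, n) such w.  The family is
   linearly independent by triangularity: coefficients separate the
   monomials, and the values at the points (0 : .. : 0 : 1 : e_b), ordered by
   |b|, separate the products. *)

Lemma lexge_total : total lexge.
Proof.
elim=> [|a s IH] [|b t] //=.
by case: (ltngtP a b) => //= ->; rewrite eqxx /=; apply: IH.
Qed.

Lemma lexge_refl : reflexive lexge.
Proof. by elim=> //= a s ->; rewrite eqxx ltnn. Qed.

Lemma lexge_trans_size x y z : size x = size y -> size y = size z ->
  lexge x y -> lexge y z -> lexge x z.
Proof.
elim: x y z => [|a x IH] [|b y] [|c z] //= [sxy] [syz].
case/orP=> [ba|/andP[/eqP ab lexy]]; case/orP=> [cb|/andP[/eqP bc leyz]].
- by rewrite (ltn_trans cb ba).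
- by rewrite -bc ba.
- by rewrite ab cb.
- by rewrite ab bc eqxx (IH y z) // orbT.
Qed.

Lemma in_tuples q n e t : t \in tuples q n e ->
  [/\ size t = n, all (fun b => b < q) t & sumn t <= e].
Proof.
elim: n e t => [|n IH] e t /=; first by rewrite inE => /eqP ->.
case/flatten_mapP=> b; rewrite mem_iota leq_min /= => /andP[bq be].
by case/mapP=> u /IH [su au se] ->; split; rewrite /= ?su ?bq //; lia.
Qed.

Lemma uniq_flatten_map (S T : eqType) (f : S -> seq T) (s : seq S) :
  uniq s -> {in s, forall x, uniq (f x)} ->
  (forall x y z, x \in s -> y \in s -> z \in f x -> z \in f y -> x = y) ->
  uniq (flatten (map f s)).
Proof.
elim: s => //= x s IH /andP[xs us] uf dj.
rewrite cat_uniq uf ?mem_head //= IH //; first last.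
- by move=> y1 y2 z y1s y2s; apply: dj; rewrite inE ?y1s ?y2s orbT.
- by move=> y ys; apply: uf; rewrite inE ys orbT.
rewrite andbT; apply/hasP => -[z /flatten_mapP[y ys zy] zx].
by move: xs; rewrite (dj x y z) ?mem_head ?inE ?ys ?orbT.
Qed.

Lemma uniq_tuples q n e : uniq (tuples q n e).
Proof.
elim: n e => [|n IH] e //=; apply: uniq_flatten_map; first exact: iota_uniq.
  by move=> b _; rewrite map_inj_uniq // => u v [].
by move=> b c z _ _ /mapP[u _ ->] /mapP[v _ []].
Qed.

Lemma hockey_stick n e :
  (\sum_(b < e.+1) 'C(n + (e - b), e - b))%N = 'C(n.+1 + e, e).
Proof.
elim: e => [|e IH]; first by rewrite big_ord1 !bin0.
rewrite big_ord_recl subn0 -[in RHS]addSnnS binS addnS -IH addnC.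
by congr (_ + _); apply: eq_bigr => b _; rewrite /bump /= add1n subSS.
Qed.

Lemma size_tuples q n e : e < q -> size (tuples q n e) = 'C(n + e, e).
Proof.
elim: n e => [|n IH] e e_lt_q /=; first by rewrite binn.
rewrite size_flatten /shape -map_comp sumnE big_map (_ : minn q e.+1 = e.+1); last by lia.
have -> : iota 0 e.+1 = index_iota 0 e.+1 by rewrite /index_iota subn0.
rewrite big_mkord -hockey_stick.
by apply: eq_bigr => b _ /=; rewrite size_map IH //; lia.
Qed.

Import GRing.Theory.
Local Open Scope ring_scope.

Section Vectors.
Variable F : finFieldType.
Local Notation E := (enum F).
Local Notation q := #|F|.

Fixpoint all_vectors (n : nat) : seq (seq F) :=
  if n is n'.+1 then [seq x :: v | x <- E, v <- all_vectors n'] else [:: [::]].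

(* The vectors v whose digit sequence [seq index x E | x <- v] is
   lexicographically smaller than al. *)
Fixpoint lex_below (al : seq nat) : seq (seq F) :=
  if al is a :: al' then
    [seq x :: v | x <- take a E, v <- all_vectors (size al')] ++
    [seq E`_a :: v | v <- lex_below al']
  else [::].

Fixpoint proj_points (n : nat) : seq (seq F) :=
  if n is n'.+1 then
    [seq 1 :: v | v <- all_vectors n'] ++ [seq 0 :: v | v <- proj_points n']
  else [::].

Lemma size_enumF : size E = q.
Proof. by rewrite cardE. Qed.

Lemma size_all_vectors n : size (all_vectors n) = (q ^ n)%N.
Proof. by elim: n => //= n IH; rewrite size_allpairs IH size_enumF expnS. Qed.

Lemma size_in_all_vectors n v : v \in all_vectors n -> size v = n.
Proof.
elim: n v => [|n IH] v /=; first by rewrite inE => /eqP ->.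
by case/allpairsP => -[x w] /= [_ /IH <- ->].
Qed.

Lemma uniq_all_vectors n : uniq (all_vectors n).
Proof.
elim: n => //= n IH; apply: allpairs_uniq => //; first exact: enum_uniq.
by move=> [x v] [y w] _ _ /= [-> ->].
Qed.

Lemma index_enum_take (x : F) k : x \in take k E -> (index x E < k)%N.
Proof.
move=> xk; rewrite -(cat_take_drop k E) index_cat xk.
by move: (xk); rewrite -index_mem size_take; case: ifP => kE; lia.
Qed.

Lemma size_lex_below al : all (fun b => b < q)%N al ->
  size (lex_below al) = (\sum_(k < size al) nth 0 al k * q ^ (size al - k.+1))%N.
Proof.
elim: al => [|a al IH] /=; first by rewrite big_ord0.
case/andP => aq alq; rewrite big_ord_recl size_cat size_allpairs size_map IH //.
by rewrite size_all_vectors size_take size_enumF aq subSS subn0.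
Qed.

Lemma size_in_lex_below al v : v \in lex_below al -> size v = size al.
Proof.
elim: al v => [|a al IH] v //=; rewrite mem_cat => /orP[].
  by case/allpairsP => -[x w] /= [_ /size_in_all_vectors <- ->].
by case/mapP => w /IH <- ->.
Qed.

Lemma uniq_lex_below al : all (fun b => b < q)%N al -> uniq (lex_below al).
Proof.
elim: al => [|a al IH] //= /andP[aq alq].
rewrite cat_uniq allpairs_uniq ?take_uniq ?enum_uniq ?uniq_all_vectors //=; last first.
  by move=> [x v] [y w] _ _ /= [-> ->].
rewrite map_inj_uniq ?IH ?andbT //; last by move=> v w [].
apply/hasP => -[z /mapP[w _ ->]] /allpairsP[[x v] /= [xa _ [ex _]]].
by have := index_enum_take xa; rewrite -ex index_uniq ?ltnn ?enum_uniq ?size_enumF.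
Qed.

Lemma lex_below_digit_lt al v b : all (fun b => b < q)%N al ->
  v \in lex_below al -> size b = size al -> lexge b al ->
  exists2 k, (k < size al)%N & (index (nth (0 : F)%R v k) E < nth 0 b k)%N.
Proof.
elim: al v b => [|a al IH] v b //= /andP[aq alq] vin; case: b => [|c b] //= [sb].
move: vin; rewrite mem_cat => /orP[].
  case/allpairsP => -[x w] /= [xa _ ->] ca; exists 0%N => //=.
  have := index_enum_take xa.
  by case/orP: ca => [ac|/andP[/eqP -> _]] // /ltn_trans; apply.
case/mapP => w wl -> /orP[ac|/andP[/eqP ca lb]].
  by exists 0%N; rewrite //= index_uniq ?enum_uniq ?size_enumF.
by have [k kl kb] := IH w b alq wl sb lb; exists k.+1.
Qed.

Lemma size_proj_points n : size (proj_points n) = (\sum_(0 <= t < n) q ^ t)%N.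
Proof.
elim: n => [|n IH]; first by rewrite big_geq.
by rewrite /= size_cat !size_map IH size_all_vectors big_nat_recr //= addnC.
Qed.

Lemma in_proj_points n v : v \in proj_points n -> size v = n /\
  exists2 k, (k < n)%N & nth 0 v k = 1 /\ forall l, (l < k)%N -> nth 0 v l = 0.
Proof.
elim: n v => [|n IH] v //=; rewrite mem_cat => /orP[] /mapP[w].
  by move=> /size_in_all_vectors sw ->; split; [rewrite /= sw | exists 0%N].
move=> /IH [sw [k kn [k1 k0]]] ->; split; first by rewrite /= sw.
by exists k.+1 => //; split => // -[|l] //= /k0.
Qed.

Lemma uniq_proj_points n : uniq (proj_points n).
Proof.
elim: n => //= n IH.
rewrite cat_uniq !map_inj_uniq ?uniq_all_vectors ?IH //=; try by move=> ? ? [].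
rewrite andbT; apply/hasP => -[z /mapP[w _ ->]] /mapP[u _ [/eqP]].
by rewrite eq_sym oner_eq0.
Qed.

End Vectors.

Lemma dhomog_bigprod (R : comNzRingType) n (I : Type) (r : seq I) (P : pred I)
    (p : I -> {mpoly R[n]}) (e : I -> nat) :
  (forall k, P k -> p k \is (e k).-homog) ->
  \prod_(k <- r | P k) p k \is (\sum_(k <- r | P k) e k)%N.-homog.
Proof.
move=> hom; apply: (big_rec2 (fun d q => q \is d.-homog)); first exact: dhomog1.
by move=> k d q /hom; apply: dhomogM.
Qed.

Lemma lin_indep_triangular (F : finFieldType) n r (Q : 'I_r -> {mpoly F[n.+1]})
    (phi : 'I_r -> {mpoly F[n.+1]} -> F) (w : 'I_r -> nat) :
  (forall t (c : 'I_r -> F),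
     phi t (\sum_(s < r) c s *: Q s) = \sum_(s < r) c s * phi t (Q s)) ->
  (forall t, phi t (Q t) != 0) ->
  (forall t s, s != t -> (w t <= w s)%N -> phi t (Q s) = 0) ->
  lin_indep Q.
Proof.
move=> lin nz tri c sum0 t0; apply/eqP; apply: contraT => ct0.
have [t ct tmin] := @arg_minnP _ t0 (fun t => c t != 0) w ct0.
have := lin t c; rewrite sum0 (bigD1 t) //= big1 ?addr0.
  have := lin t (fun _ => 0); rewrite big1 => [->|s _]; last by rewrite scale0r.
  rewrite big1 => [/eqP|s _]; last by rewrite mul0r.
  by rewrite eq_sym mulf_eq0 (negPf ct) (negPf (nz t)).
move=> s st; have [->|cs] := eqVneq (c s) 0; first by rewrite mul0r.
by rewrite tri ?mulr0 // tmin.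
Qed.

Lemma sumn_le_nth_lt (x y : seq nat) : size x = size y -> x != y ->
  (sumn y <= sumn x)%N -> exists2 k, (k < size x)%N & (nth 0 y k < nth 0 x k)%N.
Proof.
elim: x y => [|a x IH] [|b y] //= [sxy] nxy syx.
have [ba|ab] := ltnP b a; first by exists 0%N.
have neq_xy : x != y.
  apply: contraNneq nxy => exy; move: syx.
  by rewrite exy eqseq_cons eqxx andbT => syx; apply/eqP; lia.
by have [|k kx ky] := IH y sxy neq_xy; [lia | exists k.+1].
Qed.

Lemma nzeros_le_e_rdm (F : finFieldType) r d m (P : 'I_r -> {mpoly F[m.+1]}) :
  admissible d P -> (nzeros P <= e_rdm F r d m)%N.
Proof.
move=> admP; have lt : (nzeros P < #|{ffun 'I_m.+1 -> F}|.+1)%N by rewrite ltnS max_card.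
apply: (@leq_bigmax_cond _ _ (fun k : 'I_ _ => (k : nat)) (Ordinal lt)).
by rewrite /pdec; case: excluded_middle_informative => // -[]; exists P.
Qed.

Section Polynomials.
Variables (F : finFieldType) (m : nat).
Local Notation E := (enum F).
Local Notation P := {mpoly F[m.+1]}.

Definition var (k : nat) : 'I_m.+1 := inord k.

Definition mono_exp (d a : nat) (t : seq nat) (k : nat) : nat :=
  (if k < a then 0 else if k == a then d - sumn t else nth 0 t (k - a.+1))%N.

Definition mono_at (d a : nat) (t : seq nat) : 'X_{1..m.+1} :=
  [multinom mono_exp d a t k | k < m.+1].

Lemma mono_atE d a t (k : 'I_m.+1) : mono_at d a t k = mono_exp d a t k.
Proof. exact: mnmE. Qed.

Lemma sum_mono_exp d a t : (a <= m)%N -> size t = (m - a)%N -> (sumn t <= d)%N ->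
  (\sum_(0 <= k < m.+1) mono_exp d a t k)%N = d.
Proof.
move=> am st td; rewrite (big_cat_nat _ (n := a)) //=; last by lia.
rewrite big1_seq => [|k]; last by rewrite /= mem_index_iota /mono_exp => /andP[_ ->].
rewrite add0n big_ltn /mono_exp; last by lia.
rewrite ltnn eqxx -{1}(add0n a.+1) big_addn (_ : (m.+1 - a.+1)%N = size t); last by lia.
rewrite (eq_bigr (nth 0%N t)) => [|k _]; last by rewrite addnK !ifF //; lia.
by rewrite -(big_nth 0%N xpredT id) -sumnE; lia.
Qed.

Lemma mdeg_mono_at d a t : (a <= m)%N -> size t = (m - a)%N -> (sumn t <= d)%N ->
  mdeg (mono_at d a t) = d.
Proof.
move=> am st td; rewrite mdegE.
under eq_bigr => k _ do rewrite mono_atE.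
by rewrite -(big_mkord xpredT (mono_exp d a t)) sum_mono_exp.
Qed.

Lemma mono_at_inj d a a' t t' : (a <= m)%N -> (a' <= m)%N ->
  size t = (m - a)%N -> size t' = (m - a')%N -> (sumn t < d)%N -> (sumn t' < d)%N ->
  mono_at d a t = mono_at d a' t' -> a = a' /\ t = t'.
Proof.
move=> am a'm st st' td t'd e.
have lead b b' u u' : (b <= m)%N -> (sumn u < d)%N -> (b < b')%N ->
    mono_at d b u != mono_at d b' u'.
  move=> bm ud bb'; apply/eqP => /mnmP/(_ (var b)).
  by rewrite !mono_atE /mono_exp /var inordK ?ltnn ?eqxx ?bb' //; lia.
have aa' : a = a'.
  have [lt|lt|//] := ltngtP a a'; first by move: (lead _ _ t t' am td lt); rewrite e eqxx.
  by move: (lead _ _ t' t a'm t'd lt); rewrite e eqxx.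
subst a'; split => //; apply: (@eq_from_nth _ 0%N) => [|k kt]; first by rewrite st st'.
move/mnmP: e => /(_ (var (a.+1 + k))); rewrite !mono_atE /mono_exp /var inordK; last by lia.
by rewrite !ifF ?addKn //; lia.
Qed.

Lemma dhomog_mono_at d a t : (a <= m)%N -> size t = (m - a)%N -> (sumn t <= d)%N ->
  ('X_[mono_at d a t] : P) \is d.-homog.
Proof. by move=> am st td; rewrite dhomogX; apply/eqP; apply: mdeg_mono_at. Qed.

Lemma meval_mono_at_eq0 (x : 'I_m.+1 -> F) d a t : (a <= m)%N -> (sumn t < d)%N ->
  x (var a) = 0 -> ('X_[mono_at d a t] : P).@[x] = 0.
Proof.
move=> am td xa0; rewrite mevalX (bigD1 (var a)) //= xa0 mono_atE /mono_exp /var inordK //.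
by rewrite ltnn eqxx expr0n /= subn_eq0 leqNgt td mul0r.
Qed.

Definition Gpoly (d i : nat) (b : seq nat) : P :=
  'X_(var i) ^+ (d - sumn b) *
  \prod_(k < size b) \prod_(l < nth 0%N b k) ('X_(var (i.+1 + k)) - E`_l *: 'X_(var i)).

Lemma meval_Gpoly (x : 'I_m.+1 -> F) d i b : (Gpoly d i b).@[x] =
  x (var i) ^+ (d - sumn b) *
  \prod_(k < size b) \prod_(l < nth 0%N b k) (x (var (i.+1 + k)) - E`_l * x (var i)).
Proof.
rewrite mevalM rmorphXn /= mevalXU rmorph_prod; congr (_ * _).
apply: eq_bigr => k _; rewrite rmorph_prod; apply: eq_bigr => l _.
by rewrite rmorphB /= mevalZ !mevalXU.
Qed.

Lemma dhomog_Gpoly d i b : (sumn b <= d)%N -> Gpoly d i b \is d.-homog.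
Proof.
move=> bd; have dhomX (u : 'I_m.+1) : ('X_u : P) \is 1.-homog.
  by rewrite dhomogX; apply/eqP; apply: mdeg1.
have deg_Gpoly : (1 * (d - sumn b) + \sum_(k < size b) \sum_(l < nth 0%N b k) 1)%N = d.
  under eq_bigr => k _ do rewrite sum1_card card_ord.
  by rewrite -(big_mkord xpredT (nth 0%N b)) -(big_nth 0%N xpredT id) -sumnE; lia.
rewrite -{2}deg_Gpoly.
apply: dhomogM; first exact: dhomogMn.
apply: dhomog_bigprod => k _; apply: dhomog_bigprod => l _.
by apply: rpredB; [|apply: rpredZ]; apply: dhomX.
Qed.

End Polynomials.

Section Construction.
Variables (F : finFieldType) (m d i j : nat).
Hypotheses (d_gt0 : (0 < d)%N) (d_le_q : (d <= qF F)%N) (i_le_m : (i <= m)%N)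
  (j_lt : (j < 'C(m - i + (d - 1), d - 1))%N).
Local Notation q := (qF F).
Local Notation n := (m - i)%N.
Local Notation E := (enum F).
Local Notation Pm := {mpoly F[m.+1]}.

Definition tuples_desc := sort lexge (tuples q n (d - 1)).
Definition top_tuples := take j tuples_desc.
Definition alpha := nth [::] tuples_desc j.-1.

Definition monos : seq 'X_{1..m.+1} :=
  [seq mono_at m d a t | a <- iota 0 i, t <- tuples q (m - a) (d - 1)].
Definition family : seq Pm :=
  [seq 'X_[mu] | mu <- monos] ++ [seq Gpoly F m d i b | b <- top_tuples].

Lemma dpred_lt_q : (d - 1 < q)%N. Proof. by lia. Qed.

Lemma size_tuples_desc : size tuples_desc = 'C(n + (d - 1), d - 1).
Proof. by rewrite size_sort size_tuples // dpred_lt_q. Qed.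

Lemma size_top_tuples : size top_tuples = j.
Proof. by rewrite size_take size_tuples_desc j_lt. Qed.

Lemma in_tuples_desc b : b \in tuples_desc ->
  [/\ size b = n, all (fun x => x < q)%N b & (sumn b <= d - 1)%N].
Proof. by rewrite mem_sort => /in_tuples. Qed.

Lemma in_top_tuples b : b \in top_tuples ->
  [/\ size b = n, all (fun x => x < q)%N b & (sumn b <= d - 1)%N].
Proof. by move/mem_take/in_tuples_desc. Qed.

Lemma uniq_top_tuples : uniq top_tuples.
Proof. by rewrite take_uniq // sort_uniq uniq_tuples. Qed.

Lemma alpha_in : (0 < j)%N -> alpha \in tuples_desc.
Proof. by move=> j_gt0; rewrite mem_nth // size_tuples_desc; lia. Qed.

Lemma top_tuples_lexge b : (0 < j)%N -> b \in top_tuples -> lexge b alpha.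
Proof.
move=> j_gt0 bB; have ib : (index b top_tuples < j)%N by rewrite -size_top_tuples index_mem.
rewrite -(nth_index [::] bB) nth_take //.
apply: (@sorted_leq_nth_in _ [pred s : seq nat | size s == n]).
- move=> y x z; rewrite !inE => /eqP ? /eqP ? /eqP ?.
  by apply: lexge_trans_size; congruence.
- by move=> ? ?; apply: lexge_refl.
- by apply/allP => x /in_tuples_desc[sx _ _]; rewrite inE sx.
- exact/sort_sorted/lexge_total.
- by rewrite inE size_tuples_desc; lia.
- by rewrite inE size_tuples_desc; lia.
- by lia.
Qed.

Lemma in_monos mu : mu \in monos -> exists a t,
  [/\ (a < i)%N, t \in tuples q (m - a) (d - 1) & mu = mono_at m d a t].
Proof.
by case/allpairsPdep => a [t [ai tt ->]]; exists a, t; rewrite mem_iota in ai.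
Qed.

Lemma uniq_monos : uniq monos.
Proof.
apply: uniq_flatten_map; first exact: iota_uniq.
  move=> a; rewrite mem_iota => ai; rewrite map_inj_in_uniq ?uniq_tuples //.
  move=> t t' /in_tuples[st _ td] /in_tuples[st' _ td'] e.
  by have [] := mono_at_inj _ _ st st' _ _ e => //; lia.
move=> a a' z; rewrite !mem_iota => ai a'i /mapP[t /in_tuples[st _ td] ->].
case/mapP => t' /in_tuples[st' _ td'] e.
by have [] := mono_at_inj _ _ st st' _ _ e => //; lia.
Qed.

Lemma size_monos : size monos = (\sum_(1 <= a < i.+1) 'C(m + d - a, d - 1))%N.
Proof.
rewrite size_allpairs_dep sumnE big_map big_add1 /=.
have -> : iota 0 i = index_iota 0 i by rewrite /index_iota subn0.
apply: eq_big_nat => a ai; rewrite size_tuples ?dpred_lt_q //; congr 'C(_, _); lia.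
Qed.

Lemma size_family : size family = (j + \sum_(1 <= a < i.+1) 'C(m + d - a, d - 1))%N.
Proof. by rewrite size_cat !size_map size_top_tuples size_monos addnC. Qed.

Lemma nth_family_mono t : (t < size monos)%N -> nth 0 family t = 'X_[nth 0%MM monos t].
Proof. by move=> tl; rewrite nth_cat size_map tl (nth_map 0%MM). Qed.

Definition gtuple (t : nat) := nth [::] top_tuples (t - size monos).

Lemma gtuple_in t : (size monos <= t < size family)%N -> gtuple t \in top_tuples.
Proof.
move=> tf; rewrite mem_nth // size_top_tuples.
by move: tf; rewrite size_family size_monos; lia.
Qed.

Lemma nth_family_Gpoly t : (size monos <= t < size family)%N ->
  nth 0 family t = Gpoly F m d i (gtuple t).
Proof.
case/andP=> t1 t2; rewrite nth_cat size_map ltnNge t1 /= (nth_map [::]) //.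
by move: t2; rewrite size_cat !size_map; lia.
Qed.

Lemma dhomog_family p : p \in family -> p \is d.-homog.
Proof.
rewrite mem_cat => /orP[] /mapP[x xin ->].
  case/in_monos: xin => a [t [ai /in_tuples[st _ td] ->]].
  by apply: dhomog_mono_at => //; lia.
by case/in_top_tuples: xin => _ _ bd; apply: dhomog_Gpoly; lia.
Qed.

Definition point (v : seq F) : {ffun 'I_m.+1 -> F} := [ffun k : 'I_m.+1 => nth 0 v k].

Lemma point_var v k : (k <= m)%N -> point v (var m k) = nth 0 v k.
Proof. by move=> km; rewrite ffunE /var inordK. Qed.

Lemma nth_prefix (c : F) w k : nth 0 (nseq i 0 ++ c :: w) k =
  if (k < i)%N then 0 else if k == i then c else nth 0 w (k - i.+1).
Proof.
rewrite nth_cat size_nseq; case: ltnP => ki; first by rewrite nth_nseq ki.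
case: eqP => [->|ne]; first by rewrite subnn.
by have -> : (k - i = (k - i.+1).+1)%N by lia.
Qed.

Lemma meval_Gpoly_prefix (c : F) w b : size b = n ->
  (Gpoly F m d i b).@[point (nseq i 0 ++ c :: w)] =
  c ^+ (d - sumn b) * \prod_(k < size b) \prod_(l < nth 0%N b k) (nth 0 w k - E`_l * c).
Proof.
move=> sb; rewrite meval_Gpoly point_var // nth_prefix ltnn eqxx; congr (_ * _).
apply: eq_bigr => k _; apply: eq_bigr => l _.
have kn := ltn_ord k; rewrite point_var ?nth_prefix; last by lia.
by rewrite !ifF ?addKn //; lia.
Qed.

Lemma meval_monos_prefix mu (c : F) w : mu \in monos ->
  ('X_[mu] : Pm).@[point (nseq i 0 ++ c :: w)] = 0.
Proof.
case/in_monos => a [t [ai /in_tuples[_ _ td] ->]].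
by apply: meval_mono_at_eq0; rewrite ?point_var ?nth_prefix ?ai //; lia.
Qed.

Lemma meval_Gpoly_affine w b : size b = n ->
  (exists2 k, (k < size b)%N & exists2 l, (l < nth 0%N b k)%N & nth 0 w k = E`_l) ->
  (Gpoly F m d i b).@[point (nseq i 0 ++ 1 :: w)] = 0.
Proof.
move=> sb [k kb [l lb e]]; rewrite meval_Gpoly_prefix // expr1n mul1r.
apply/eqP/prodf_eq0; exists (Ordinal kb) => //; apply/prodf_eq0.
by exists (Ordinal lb) => //=; rewrite e mulr1 subrr.
Qed.

Lemma meval_Gpoly_infinity w b : size b = n -> (sumn b <= d - 1)%N ->
  (Gpoly F m d i b).@[point (nseq i 0 ++ 0 :: w)] = 0.
Proof.
move=> sb bd; rewrite meval_Gpoly_prefix // expr0n.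
by rewrite (_ : (d - sumn b == 0)%N = false) ?mul0r //; lia.
Qed.

Definition tuple_point (b : seq nat) := point (nseq i 0 ++ 1 :: map (nth 0 E) b).

Lemma meval_Gpoly_tuple_point_neq0 b : b \in top_tuples ->
  (Gpoly F m d i b).@[tuple_point b] != 0.
Proof.
case/in_top_tuples => sb /allP bq _; rewrite meval_Gpoly_prefix ?size_map // expr1n mul1r.
apply/prodf_neq0 => k _; apply/prodf_neq0 => l _; rewrite mulr1 (nth_map 0%N) // subr_eq0.
have kq : (nth 0%N b k < #|F|)%N by apply: bq; rewrite mem_nth.
rewrite nth_uniq ?enum_uniq ?size_enumF //; last by apply: ltn_trans kq.
by rewrite neq_ltn ltn_ord orbT.
Qed.

Lemma meval_Gpoly_tuple_point_eq0 b b' : size b = n -> size b' = n -> b != b' ->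
  (sumn b' <= sumn b)%N -> (Gpoly F m d i b).@[tuple_point b'] = 0.
Proof.
move=> sb sb' ne le; have [k kb lt] := sumn_le_nth_lt (etrans sb (esym sb')) ne le.
apply: meval_Gpoly_affine => //; exists k => //; exists (nth 0%N b' k) => //.
by rewrite (nth_map 0%N) // sb' -sb.
Qed.

Definition probe (t : nat) (p : Pm) : F :=
  if (t < size monos)%N then p@_(nth 0%MM monos t) else p.@[tuple_point (gtuple t)].

Definition weight (t : nat) : nat :=
  if (t < size monos)%N then d else sumn (gtuple t).

Lemma probe_linear t r (c : 'I_r -> F) (Q : 'I_r -> Pm) :
  probe t (\sum_(s < r) c s *: Q s) = \sum_(s < r) c s * probe t (Q s).
Proof.
rewrite /probe; case: ifP => _; rewrite raddf_sum; apply: eq_bigr => s _.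
  exact: mcoeffZ.
exact: mevalZ.
Qed.

Lemma probe_diag t : (t < size family)%N -> probe t (nth 0 family t) != 0.
Proof.
move=> tf; rewrite /probe; case: ifPn => tm.
  by rewrite nth_family_mono // mcoeffX eqxx oner_eq0.
have tG : (size monos <= t < size family)%N by rewrite leqNgt tm.
by rewrite nth_family_Gpoly //; apply/meval_Gpoly_tuple_point_neq0/gtuple_in.
Qed.

Lemma gtuple_neq t s : (size monos <= t < size family)%N ->
  (size monos <= s < size family)%N -> s != t -> gtuple s != gtuple t.
Proof.
move=> tf sf st; rewrite /gtuple nth_uniq ?uniq_top_tuples ?size_top_tuples //;
  by move: sf tf; rewrite size_family size_monos; lia.
Qed.

Lemma probe_triangular t s : (t < size family)%N -> (s < size family)%N -> s != t ->
  (weight t <= weight s)%N -> probe t (nth 0 family s) = 0.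
Proof.
move=> tf sf st; rewrite /weight /probe.
case: ifPn => tm; case: ifPn => sm.
- by rewrite nth_family_mono // mcoeffX nth_uniq ?uniq_monos // (negPf st).
- have sG : (size monos <= s < size family)%N by rewrite leqNgt sm.
  by have [_ _ bd] := in_top_tuples (gtuple_in sG); lia.
- by rewrite nth_family_mono // meval_monos_prefix // mem_nth.
- have sG : (size monos <= s < size family)%N by rewrite leqNgt sm.
  have tG : (size monos <= t < size family)%N by rewrite leqNgt tm.
  have [sbs _ _] := in_top_tuples (gtuple_in sG).
  have [sbt _ _] := in_top_tuples (gtuple_in tG).
  move=> le_w; rewrite nth_family_Gpoly //.
  by apply: meval_Gpoly_tuple_point_eq0 => //; apply: gtuple_neq.
Qed.

Definition family_at (t : 'I_(size family)) : Pm := nth 0 family t.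

Lemma admissible_family : admissible d family_at.
Proof.
split=> [t|]; first by apply: dhomog_family; rewrite mem_nth.
apply: (@lin_indep_triangular _ _ _ _ (fun t => probe t) (fun t => weight t)).
- by move=> t c; apply: probe_linear.
- by move=> t; apply: probe_diag.
- by move=> t s st; apply: probe_triangular.
Qed.

Definition affine_part := if j is 0 then all_vectors F n else lex_below F alpha.

Definition zero_vectors :=
  [seq nseq i 0 ++ 1 :: v | v <- affine_part] ++
  [seq nseq i 0 ++ 0 :: v | v <- proj_points F n].

Lemma in_tuples_alpha : (0 < j)%N -> size alpha = n /\ all (fun x => x < #|F|)%N alpha.
Proof. by move=> j_gt0; have [? ? _] := in_tuples_desc (alpha_in j_gt0). Qed.

Lemma affine_partE : (0 < j)%N -> affine_part = lex_below F alpha.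
Proof. by rewrite /affine_part /alpha; case: (j). Qed.

Lemma size_in_affine_part w : w \in affine_part -> size w = n.
Proof.
case: (posnP j) => [j0|/[dup] /in_tuples_alpha[sa _] /affine_partE ->].
  by rewrite /affine_part j0; apply: size_in_all_vectors.
by rewrite -sa; apply: size_in_lex_below.
Qed.

Lemma uniq_affine_part : uniq affine_part.
Proof.
case: (posnP j) => [j0|/[dup] /in_tuples_alpha[_ aq] /affine_partE ->].
  by rewrite /affine_part j0; apply: uniq_all_vectors.
exact: uniq_lex_below.
Qed.

Lemma size_affine_part : size affine_part = Hs q j (d - 1) n.
Proof.
case: (posnP j) => [j0|j_gt0]; first by rewrite /affine_part /Hs j0 size_all_vectors.
have [sa aq] := in_tuples_alpha j_gt0.
by rewrite affine_partE // size_lex_below // sa /Hs -(prednK j_gt0).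
Qed.

Lemma family_vanish_affine p w : p \in family -> w \in affine_part ->
  p.@[point (nseq i 0 ++ 1 :: w)] = 0.
Proof.
rewrite mem_cat => /orP[] /mapP[b bin ->] waff; first exact: meval_monos_prefix.
have j_gt0 : (0 < j)%N by rewrite -size_top_tuples; case: (top_tuples) bin.
have [sb _ _] := in_top_tuples bin; have [sa aq] := in_tuples_alpha j_gt0.
move: waff; rewrite affine_partE // => waff.
have [k ka kw] :=
  lex_below_digit_lt aq waff (etrans sb (esym sa)) (top_tuples_lexge j_gt0 bin).
apply: meval_Gpoly_affine => //; exists k; first by rewrite sb -sa.
by exists (index (nth 0 w k) E); rewrite ?nth_index ?mem_enum.
Qed.

Lemma family_vanish_infinity p w : p \in family -> p.@[point (nseq i 0 ++ 0 :: w)] = 0.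
Proof.
rewrite mem_cat => /orP[] /mapP[b bin ->]; first exact: meval_monos_prefix.
by have [sb _ bd] := in_top_tuples bin; apply: meval_Gpoly_infinity.
Qed.

Lemma family_vanish v p : v \in zero_vectors -> p \in family -> p.@[point v] = 0.
Proof.
rewrite mem_cat => /orP[] /mapP[w wz ->] pf; first exact: family_vanish_affine.
exact: family_vanish_infinity.
Qed.

Lemma prefix_inj (c : F) : injective (fun w => nseq i 0 ++ c :: w).
Proof. by move=> w w' /eqP; rewrite eqseq_cat ?size_nseq // => /andP[_ /eqP [->]]. Qed.

Lemma uniq_zero_vectors : uniq zero_vectors.
Proof.
rewrite cat_uniq !map_inj_uniq ?uniq_affine_part ?uniq_proj_points ?andbT //;
  try exact: prefix_inj.
apply/hasP => -[z /mapP[w _ ->]] /mapP[u _] /(congr1 (nth 0 ^~ i)).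
by rewrite !nth_prefix ltnn eqxx => /eqP; rewrite eq_sym oner_eq0.
Qed.

Lemma size_in_zero_vectors v : v \in zero_vectors -> size v = m.+1.
Proof.
rewrite mem_cat => /orP[] /mapP[w wz ->]; rewrite size_cat size_nseq /=.
  by rewrite size_in_affine_part //; lia.
by have [-> _] := in_proj_points wz; lia.
Qed.

Lemma normalized_zero_vectors v : v \in zero_vectors -> normalized (point v).
Proof.
rewrite mem_cat => /orP[] /mapP[w wz ->]; apply/existsP.
  have ii : (i < m.+1)%N by lia.
  exists (Ordinal ii); rewrite ffunE /= nth_prefix ltnn !eqxx /=.
  by apply/forallP => l; apply/implyP => li; rewrite ffunE nth_prefix li.
have [sw [k kn [k1 k0]]] := in_proj_points wz.
have ki : (i.+1 + k < m.+1)%N by lia.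
exists (Ordinal ki); rewrite ffunE /= nth_prefix !ifF ?addKn ?k1 ?eqxx /=; try lia.
apply/forallP => l; apply/implyP => li; rewrite ffunE nth_prefix.
by case: ifP => [//|/negbT l_ge_i]; case: ifP => [//|/negbT l_ne_i]; rewrite k0 //; lia.
Qed.

Lemma point_inj : {in zero_vectors &, injective point}.
Proof.
move=> v v' /size_in_zero_vectors sv /size_in_zero_vectors sv' e.
apply: (@eq_from_nth _ 0) => [|k]; first by rewrite sv sv'.
rewrite sv => km; have := congr1 (fun f : {ffun 'I_m.+1 -> F} => f (Ordinal km)) e.
by rewrite !ffunE.
Qed.

Lemma nzeros_family : (size zero_vectors <= nzeros family_at)%N.
Proof.
rewrite -(size_map point) -(card_uniqP _); last first.
  by rewrite map_inj_in_uniq ?uniq_zero_vectors //; apply: point_inj.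
apply: subset_leq_card; apply/subsetP => x /mapP[v vZ ->].
rewrite inE normalized_zero_vectors //=; apply/forallP => t; apply/eqP.
by apply: family_vanish; rewrite ?mem_nth.
Qed.

Lemma size_proj_points_pq : size (proj_points F n) = pq F (m%:Z - i%:Z - 1).
Proof.
case en : n => [|n'].
  by have -> : (m%:Z - i%:Z - 1 = Negz 0)%R by rewrite NegzE; lia.
have -> : (m%:Z - i%:Z - 1 = Posz n')%R by lia.
by rewrite size_proj_points.
Qed.

Lemma size_zero_vectors :
  size zero_vectors = (Hs q j (d - 1) n + pq F (m%:Z - i%:Z - 1))%N.
Proof. by rewrite size_cat !size_map size_affine_part size_proj_points_pq. Qed.

Lemma zero_vectors_le_e_rdm : (size zero_vectors <= e_rdm F (size family) d m)%N.
Proof. exact: leq_trans nzeros_family (nzeros_le_e_rdm admissible_family). Qed.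

End Construction.

Theorem theorem5p10 (F : finFieldType) (m d r i j : nat) :
  (0 < m)%N -> (0 < d)%N -> (0 < r)%N ->
  (d <= qF F)%N -> (r <= 'C(m + d, d))%N ->
  ((r < 'C(m + d, d))%N ->
     [/\ r = (j + \sum_(1 <= a < i.+1) 'C(m + d - a, d - 1))%N,
         (i <= m)%N & (j < 'C(m + d - i - 1, d - 1))%N]) ->
  (r = 'C(m + d, d) -> i = m /\ j = 1%N) ->
  (Hs (qF F) j (d - 1) (m - i) + pq F (m%:Z - i%:Z - 1)%R <= e_rdm F r d m)%N.
Proof.
move=> _ d_gt0 _ d_le_q r_le r_lt_dec r_eq_dec.
case: (ltngtP r 'C(m + d, d)) r_le => // [r_lt|r_eq] _; last first.
  have [-> ->] := r_eq_dec r_eq; rewrite subnn.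
  have -> : (m%:Z - m%:Z - 1 = Negz 0)%R by rewrite NegzE; lia.
  by rewrite /Hs big_ord0.
have [-> i_le_m j_lt] := r_lt_dec r_lt.
have j_lt' : (j < 'C(m - i + (d - 1), d - 1))%N.
  by have -> : (m - i + (d - 1) = m + d - i - 1)%N by lia.
have := zero_vectors_le_e_rdm d_gt0 d_le_q i_le_m j_lt'.
by rewrite size_family // size_zero_vectors.
Qed.
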